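(* Let $K\in M_N(\mathbb C)$ satisfy $K^*=-K$, and let $\alpha=q/2$. If $b(t)$, $t$ in an interval, is a continuously differentiable curve of positive elements of $M_N(\mathbb C)$ solving $$\dot b=b^{\alpha}K-Kb^{\alpha},$$ and $s\ge 1$, then $\|b(t)\|_s$ is constant, and the eigenvalues of $b(t)$ and their multiplicities do not depend on $t$. In particular the operator norm $\|b(t)\|$ is constant.
   Context: $p=2n\ge2$ is a fixed even integer and $q=p/(p-1)$ is its conjugate exponent. $\tau(x)=\frac1N\operatorname{Re}\operatorname{Tr}(x)$, $|x|=(x^*x)^{1/2}$, and $\|x\|_s=\tau(|x|^s)^{1/s}$. $b^\alpha$ denotes the positive power of the positive matrix $b$ via functional calculus. *)

From HB Require Import structures.
From mathcomp Require Import all_boot all_order all_algebra.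
From mathcomp Require Import sesquilinear spectral.
From mathcomp Require Import all_classical all_reals all_analysis.
From mathcomp Require Import complex.
Set Implicit Arguments. Unset Strict Implicit. Unset Printing Implicit Defensive.
Import Order.TTheory GRing.Theory Num.Theory.
Import numFieldNormedType.Exports.
Local Open Scope classical_set_scope.
Local Open Scope ring_scope.
Local Open Scope sesquilinear_scope.

Section Defs.
Variable R : realType.
Local Notation C := (R[i]).

Definition RtoC (x : R) : C := complex.Complex x 0.

Definition psdmx (N : nat) (b : 'M[C]_N) : Prop :=
  b ^t* = b /\ forall v : 'rV[C]_N, 0 <= (v *m b *m v ^t*) 0 0.

Definition spec_decomp (N : nat) (b : 'M[C]_N) (Ud : 'M[C]_N * 'rV[R]_N) : Prop :=
  Ud.1 \is unitarymx /\ (forall i, 0 <= Ud.2 0 i) /\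
  b = Ud.1 ^t* *m diag_mx (map_mx RtoC Ud.2) *m Ud.1.

(* functional calculus b^a for a positive matrix b and real a > 0:
   b^a = U^* diag(d_i^a) U  for any spectral decomposition (choice of one);
   the result does not depend on the chosen decomposition. *)
Definition mxpowR (N : nat) (b : 'M[C]_N) (a : R) : 'M[C]_N :=
  let Ud := xget (1%:M, 0) (spec_decomp b) in
  Ud.1 ^t* *m diag_mx (map_mx (fun x => RtoC (powR x a)) Ud.2) *m Ud.1.

Definition ntau (N : nat) (x : 'M[C]_N) : R := N%:R^-1 * complex.Re (\tr x).

(* |x| = (x^* x)^{1/2}, hence |x|^s = (x^* x)^{s/2};  ||x||_s = tau(|x|^s)^{1/s} *)
Definition snorm (N : nat) (s : R) (x : 'M[C]_N) : R :=
  powR (ntau (mxpowR (x ^t* *m x) (s / 2))) s^-1.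

Definition vnorm (N : nat) (v : 'cV[C]_N) : R :=
  Num.sqrt (\sum_i (complex.Re (v i 0) ^+ 2 + complex.Im (v i 0) ^+ 2)).

Definition opnorm (N : nat) (x : 'M[C]_N) : R :=
  sup [set vnorm (x *m v) | v in [set v : 'cV[C]_N | vnorm v <= 1]].

(* f : R -> R has derivative d at t within the set I (one-sided at endpoints) *)
Definition deriv_within (I : set R) (f : R -> R) (t d : R) : Prop :=
  (fun h : R => h^-1 * (f (t + h) - f t)) @ within (fun h => I (t + h)) (0 : R)^' --> d.

Definition C1_curve (I : set R) (N : nat) (b db : R -> 'M[C]_N) : Prop :=
  (forall t, I t -> forall i j,
      deriv_within I (fun u => complex.Re (b u i j)) t (complex.Re (db t i j)) /\
      deriv_within I (fun u => complex.Im (b u i j)) t (complex.Im (db t i j))) /\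
  (forall i j, {within I, continuous (fun t => complex.Re (db t i j))} /\
               {within I, continuous (fun t => complex.Im (db t i j))}).

Definition conj_exp (p : R) : R := p / (p - 1).
End Defs.

From HB Require Import structures.
From mathcomp Require Import all_boot all_order all_algebra.
From mathcomp Require Import sesquilinear spectral.
From mathcomp Require Import all_classical all_reals all_analysis.
From mathcomp Require Import complex.
From mathcomp Require Import ring lra.
From mathcomp Require Import perm.
Import Order.TTheory GRing.Theory Num.Theory.
Import numFieldNormedType.Exports.
Local Open Scope classical_set_scope.
Local Open Scope ring_scope.
Local Open Scope sesquilinear_scope.

(* Write the equation as b' = A K - K A with A = b^(q/2), which commutes with b.
   Then (b^k)' = A S - S A for some S, so tr (b^k) is constant in t for every k.
   The power sums tr (b^k) determine the eigenvalues of the positive matrix b with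
   their multiplicities, so b(t1) and b(t2) are unitarily similar. Eigenspace
   dimensions and the operator norm are unitary invariants, and ||b||_s depends
   only on the eigenvalues of b^* b = b^2. *)

Section DerivWithin.
Context {R : realType}.
Implicit Types (I : set R) (f g : R -> R).

Lemma near_distP (x : R) (P : R -> Prop) :
  (\forall y \near x, P y) <-> exists2 d : R, 0 < d & forall y, `|y - x| < d -> P y.
Proof.
split => [/nbhs_ballP [d /= d0 H]|[d d0 H]].
  by exists d => // y hy; apply: H; rewrite /ball /= distrC.
by apply/nbhs_ballP; exists d => //= y; rewrite /ball /= distrC; exact: H.
Qed.

Lemma deriv_within_lipschitz {I f t d} : deriv_within I f t d ->
  exists2 del : R, 0 < del & forall y, I y -> `|y - t| < del ->
     `|f y - f t| <= (`|d| + 1) * `|y - t|.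
Proof.
move=> /cvgrPdist_lt /(_ 1 ltr01); rewrite near_withinE => /near_distP [del del0 Hd].
exists del => // y Iy hy.
have [->|yt] := eqVneq y t; first by rewrite !subrr normr0 mulr0.
have h0 : y - t != 0 by rewrite subr_eq0.
have := Hd (y - t); rewrite subr0 subrKC => /(_ hy h0 Iy) Hq.
have -> : f y - f t = (y - t) * ((y - t)^-1 * (f y - f t)) by rewrite mulVKf.
rewrite normrM mulrC ler_wpM2r // -[X in `|X|](subrK d) (le_trans (ler_normD _ _)) //.
by rewrite addrC lerD2l distrC ltW.
Qed.

Lemma deriv_within_continuous {I f t d} : deriv_within I f t d ->
  forall e : R, 0 < e -> \forall y \near t, I y -> `|f t - f y| < e.
Proof.
move=> /deriv_within_lipschitz [del del0 Hl] e e0; apply/near_distP.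
have M0 : 0 < `|d| + 1 by rewrite ltr_wpDl.
exists (Num.min del (e / (`|d| + 1))); first by rewrite lt_min del0 divr_gt0.
move=> y; rewrite lt_min => /andP [ydel ye] Iy.
rewrite distrC (le_lt_trans (Hl y Iy ydel)) // mulrC -ltr_pdivlMr //.
Qed.

Lemma deriv_within_is_derive {I f x d} : (\forall y \near x, I y) ->
  deriv_within I f x d -> is_derive x 1 f d.
Proof.
move=> /near_distP [r r0 Ix] Hd.
have I0 : \forall h \near (0 : R)^', I (x + h).
  apply: nbhs_dnbhs; apply/near_distP; exists r => // h; rewrite subr0 => hr.
  by apply: Ix; rewrite addrC addKr.
have Hquot : (fun h : R => h^-1 *: ((f \o shift x) (h *: 1) - f x)) @ 0^' --> d.
  apply/cvgrPdist_lt => e e0; move/cvgrPdist_lt: Hd => /(_ e e0).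
  rewrite near_withinE; apply: filterS2 I0 => h Ih /(_ Ih).
  by rewrite /= /shift [h%:A]mulr1 [h + x]addrC.
apply: DeriveDef; first by apply/cvgP: Hquot.
exact: cvg_lim.
Qed.

Lemma deriv_within_continuous_itv {I f df} {a b : R} :
  (forall x, a <= x <= b -> I x) -> (forall x, I x -> deriv_within I f x (df x)) ->
  {within `[a, b], continuous f}.
Proof.
move=> abI Hd; apply/subspace_continuousP => x /[dup] xab /abI Ix.
apply/cvgrPdist_lt => e e0; rewrite near_withinE.
apply: filterS (deriv_within_continuous (Hd x Ix) e e0) => y Hy yab.
by apply: Hy; apply: abI; move: yab; rewrite /= in_itv.
Qed.

Lemma deriv_within0_constant {I f} : is_interval I ->
  (forall t, I t -> deriv_within I f t 0) -> forall t1 t2, I t1 -> I t2 -> f t1 = f t2.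
Proof.
move=> hI hd; suff lt_const t1 t2 : I t1 -> I t2 -> t1 < t2 -> f t1 = f t2.
  move=> t1 t2 I1 I2; case: (ltgtP t1 t2) => [|lt21|->//]; first exact: lt_const.
  exact/esym/lt_const.
move=> I1 I2 lt12; have abI x : t1 <= x <= t2 -> I x by apply: hI.
have f'0 x : x \in `]t1, t2[ -> is_derive x 1 f 0.
  rewrite in_itv /= => /andP [x1 x2]; apply: (deriv_within_is_derive (I := I)).
    apply/near_distP; exists (Num.min (x - t1) (t2 - x)).
      by rewrite lt_min !subr_gt0 x1 x2.
    move=> y; rewrite lt_min !ltr_distl => /andP [/andP [? ?] /andP [? ?]].
    by apply: abI; apply/andP; split; lra.
  by apply: hd; apply: abI; rewrite !ltW.
have [c _] := MVT lt12 f'0 (deriv_within_continuous_itv abI hd).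
by rewrite mul0r => /eqP; rewrite subr_eq0 => /eqP.
Qed.

Lemma deriv_within_eq {I f g t d} : f =1 g -> deriv_within I f t d -> deriv_within I g t d.
Proof. by move=> /funext <-. Qed.

Lemma deriv_within_cst I (c : R) t : deriv_within I (fun=> c) t 0.
Proof. by rewrite /deriv_within; under eq_fun do rewrite subrr mulr0; exact: cvg_cst. Qed.

Lemma deriv_within_add {I f g t df dg} : deriv_within I f t df -> deriv_within I g t dg ->
  deriv_within I (fun u => f u + g u) t (df + dg).
Proof.
move=> Hf Hg; rewrite /deriv_within.
under eq_fun do rewrite opprD addrACA mulrDr.
exact: cvgD.
Qed.

Lemma deriv_within_opp {I f t df} : deriv_within I f t df ->
  deriv_within I (fun u => - f u) t (- df).
Proof.
move=> Hf; rewrite /deriv_within.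
under eq_fun do rewrite -opprD mulrN.
exact: cvgN.
Qed.

Lemma deriv_within_sub {I f g t df dg} : deriv_within I f t df -> deriv_within I g t dg ->
  deriv_within I (fun u => f u - g u) t (df - dg).
Proof. by move=> Hf Hg; apply: deriv_within_add Hf (deriv_within_opp Hg). Qed.

Lemma deriv_within_mul {I f g t df dg} : deriv_within I f t df -> deriv_within I g t dg ->
  deriv_within I (fun u => f u * g u) t (df * g t + f t * dg).
Proof.
rewrite /deriv_within => Hf Hg; set F := within _ _ in Hf Hg *.
have Hg_cont : (fun h => g (t + h)) @ F --> g t.
  have -> : (fun h => g (t + h)) = (fun h => g t + h * (h^-1 * (g (t + h) - g t))).
    apply: funext => h; have [->|h0] := eqVneq h 0; first by rewrite addr0 mul0r addr0.
    by rewrite mulVKf // subrKC.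
  rewrite -[X in _ --> X]addr0 -(mul0r dg); apply: cvgD; first exact: cvg_cst.
  by apply: cvgM => //; apply: cvg_within_filter; exact: cvg_within.
have -> : (fun h => h^-1 * (f (t + h) * g (t + h) - f t * g t)) =
  (fun h => h^-1 * (f (t + h) - f t) * g (t + h) + f t * (h^-1 * (g (t + h) - g t))).
  by apply: funext => h; ring.
by apply: cvgD; apply: cvgM => //; exact: cvg_cst.
Qed.

Lemma deriv_within_sum {I} {T : Type} {r : seq T} {F : T -> R -> R} {dF : T -> R} {t} :
  (forall x, deriv_within I (F x) t (dF x)) ->
  deriv_within I (fun u => \sum_(x <- r) F x u) t (\sum_(x <- r) dF x).
Proof.
move=> H; elim: r => [|a r IH].
  rewrite big_nil; apply: (deriv_within_eq _ (deriv_within_cst I 0 t)) => u.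
  by rewrite big_nil.
rewrite big_cons; apply: (deriv_within_eq _ (deriv_within_add (H a) IH)) => u.
by rewrite big_cons.
Qed.

End DerivWithin.

Section ComplexCurves.
Context {R : realType}.
Local Notation C := R[i].
(* Seen on [Rcomplex R], [Re] and [Im] are [R]-linear maps, so [raddfD] and
   [raddf_sum] apply to them. *)
Local Notation Re := (@complex.Re R : Rcomplex R -> R).
Local Notation Im := (@complex.Im R : Rcomplex R -> R).
Implicit Types (I : set R).

Lemma ReM (x y : C) : Re (x * y : C) = Re x * Re y - Im x * Im y.
Proof. by case: x; case: y. Qed.

Lemma ImM (x y : C) : Im (x * y : C) = Re x * Im y + Im x * Re y.
Proof. by case: x => a b; case: y => c d /=; ring. Qed.

Definition cderiv_within I (g : R -> C) t (z : C) : Prop :=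
  deriv_within I (fun u => Re (g u)) t (Re z) /\
  deriv_within I (fun u => Im (g u)) t (Im z).

Lemma cderiv_within_eq {I g h t z} :
  g =1 h -> cderiv_within I g t z -> cderiv_within I h t z.
Proof. by move=> /funext <-. Qed.

Lemma cderiv_within_cst I (c : C) t : cderiv_within I (fun=> c) t 0.
Proof. by split; apply: deriv_within_cst. Qed.

Lemma cderiv_within_sum {I} {T : Type} {r : seq T} {F : T -> R -> C} {dF : T -> C} {t} :
  (forall x, cderiv_within I (F x) t (dF x)) ->
  cderiv_within I (fun u => \sum_(x <- r) F x u) t (\sum_(x <- r) dF x).
Proof.
move=> H; rewrite /cderiv_within !raddf_sum /=; split.
- apply: (deriv_within_eq _ (deriv_within_sum (fun x => (H x).1))) => u.
  by rewrite raddf_sum.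
- apply: (deriv_within_eq _ (deriv_within_sum (fun x => (H x).2))) => u.
  by rewrite raddf_sum.
Qed.

Lemma cderiv_within_mul {I g h t dg dh} :
  cderiv_within I g t dg -> cderiv_within I h t dh ->
  cderiv_within I (fun u => g u * h u) t (dg * h t + g t * dh).
Proof.
move=> [Rg Ig] [Rh Ih]; rewrite /cderiv_within !raddfD /=; split.
- rewrite !ReM.
  apply: (deriv_within_eq (f := fun u => Re (g u) * Re (h u) - Im (g u) * Im (h u))).
    by move=> u; rewrite ReM.
  have := deriv_within_sub (deriv_within_mul Rg Rh) (deriv_within_mul Ig Ih).
  by congr deriv_within; ring.
- rewrite !ImM.
  apply: (deriv_within_eq (f := fun u => Re (g u) * Im (h u) + Im (g u) * Re (h u))).
    by move=> u; rewrite ImM.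
  have := deriv_within_add (deriv_within_mul Rg Ih) (deriv_within_mul Ig Rh).
  by congr deriv_within; ring.
Qed.

End ComplexCurves.

Section MatrixCurves.
Context {R : realType} {N : nat}.
Local Notation C := R[i].
Implicit Types (I : set R) (B : R -> 'M[C]_N) (D : 'M[C]_N).

Definition mx_deriv_within I B t D : Prop :=
  forall i j, cderiv_within I (fun u => B u i j) t (D i j).

Lemma mx_deriv_within_cst I (A : 'M[C]_N) t : mx_deriv_within I (fun=> A) t 0.
Proof. by move=> i j; rewrite mxE; apply: cderiv_within_cst. Qed.

Lemma mx_deriv_within_mul {I B1 B2 t D1 D2} :
  mx_deriv_within I B1 t D1 -> mx_deriv_within I B2 t D2 ->
  mx_deriv_within I (fun u => B1 u *m B2 u) t (D1 *m B2 t + B1 t *m D2).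
Proof.
move=> H1 H2 i j; rewrite !mxE -big_split /=.
have Hl l := cderiv_within_mul (H1 i l) (H2 l j).
by apply: (cderiv_within_eq _ (cderiv_within_sum Hl)) => u; rewrite mxE.
Qed.

Fixpoint mxexp_deriv (B D : 'M[C]_N) k : 'M[C]_N :=
  if k is k'.+1 then mxexp_deriv B D k' *m B + B ^+ k' *m D else 0.

Lemma mx_deriv_within_exp {I B t D} k : mx_deriv_within I B t D ->
  mx_deriv_within I (fun u => B u ^+ k) t (mxexp_deriv (B t) D k).
Proof.
move=> HB; elim: k => [|k IH] /=.
  by under eq_fun do rewrite expr0; exact: mx_deriv_within_cst.
under eq_fun do rewrite exprSr -mulmxE.
exact: mx_deriv_within_mul.
Qed.

Lemma deriv_within_Re_trace {I B t D} : mx_deriv_within I B t D ->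
  deriv_within I (fun u => complex.Re (\tr (B u))) t (complex.Re (\tr D)).
Proof. by move=> HB; apply: (cderiv_within_sum (fun i => HB i i)).1. Qed.

Lemma mxexp_deriv_commutator {A B : 'M[C]_N} (K : 'M[C]_N) k : A *m B = B *m A ->
  mxexp_deriv B (A *m K - K *m A) k = A *m mxexp_deriv B K k - mxexp_deriv B K k *m A.
Proof.
rewrite mulmxE => AB; elim: k => [|k IH] /=; first by rewrite mulr0 mul0r subrr.
rewrite IH !mulmxE mulrBl mulrBr mulrDl mulrDr !mulrA (commrX k AB).
by rewrite -[_ * A * B]mulrA AB mulrA addrACA opprD.
Qed.

End MatrixCurves.

Lemma mxtrace_commutator {F : comNzRingType} {n : nat} (A B : 'M[F]_n) :
  \tr (A *m B - B *m A) = 0.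
Proof. by rewrite raddfB /= mxtrace_mulC subrr. Qed.

Lemma Re_trace_exp_const {R : realType} {N : nat} {I : set R} {b db A : R -> 'M[R[i]]_N}
    {K : 'M[R[i]]_N} : is_interval I ->
  (forall t, I t -> mx_deriv_within I b t (db t)) ->
  (forall t, I t -> db t = A t *m K - K *m A t) ->
  (forall t, I t -> A t *m b t = b t *m A t) ->
  forall k t1 t2, I t1 -> I t2 ->
    complex.Re (\tr (b t1 ^+ k)) = complex.Re (\tr (b t2 ^+ k)).
Proof.
move=> hI hd hode hc k; apply: (deriv_within0_constant hI) => t It.
have := deriv_within_Re_trace (mx_deriv_within_exp k (hd t It)).
by rewrite hode // (mxexp_deriv_commutator K k (hc t It)) mxtrace_commutator.
Qed.

Lemma count_mem_mktuple {T : eqType} {n : nat} (f : 'I_n -> T) x :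
  count_mem x [tuple f i | i < n] = (\sum_i (f i == x))%N.
Proof.
rewrite /= count_map -sum1_count big_enum_cond big_mkcond /=.
by apply: eq_bigr => i _; case: eqP.
Qed.

Section PowerSums.
Context {R : numDomainType} {N : nat}.
Implicit Types (d e : 'I_N -> R) (p : {poly R}).

Lemma sum_horner_eq {d e} : (forall k, \sum_i d i ^+ k = \sum_i e i ^+ k) ->
  forall p, \sum_i p.[d i] = \sum_i p.[e i].
Proof.
move=> dek p; under eq_bigr do rewrite horner_coef.
under [RHS]eq_bigr do rewrite horner_coef.
rewrite exchange_big [RHS]exchange_big; apply: eq_bigr => j _.
by rewrite -!mulr_sumr dek.
Qed.

Lemma exists_indicator_poly (L : seq R) x :
  exists2 p, p.[x] != 0 & {in L, forall y, p.[y] = (y == x)%:R * p.[x]}.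
Proof.
exists (\prod_(z <- L | z != x) ('X - z%:P)).
  rewrite horner_prod prodf_seq_neq0; apply/allP => z _; apply/implyP => zx.
  by rewrite !hornerE subr_eq0 eq_sym.
move=> y yL; have [->|yx] := eqVneq y x; first by rewrite mul1r.
rewrite mul0r horner_prod; apply/eqP; rewrite prodf_seq_eq0.
by apply/hasP; exists y => //; rewrite yx /= !hornerE subrr.
Qed.

Lemma sum_horner_indicator d p x : (forall i, p.[d i] = (d i == x)%:R * p.[x]) ->
  \sum_i p.[d i] = (count_mem x [tuple d i | i < N])%:R * p.[x].
Proof.
by move=> pd; rewrite count_mem_mktuple natr_sum mulr_suml; apply: eq_bigr => i _.
Qed.

Lemma power_sums_perm d e : (forall k, \sum_i d i ^+ k = \sum_i e i ^+ k) ->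
  exists s : 'S_N, forall i, e i = d (s i).
Proof.
move=> dek; suff /tuple_permP [s es] : perm_eq [tuple e i | i < N] [tuple d i | i < N].
  have {}es : [tuple e i | i < N] = [tuple tnth [tuple d i | i < N] (s i) | i < N].
    exact: val_inj.
  by exists s => i; have := congr1 (fun t => tnth t i) es; rewrite !tnth_mktuple.
apply/allP => x _; apply/eqP.
set L := [tuple d i | i < N] ++ [tuple e i | i < N].
have [p px0 pL] := exists_indicator_poly L x.
have dL i : d i \in L by rewrite mem_cat (map_f d) ?mem_enum.
have eL i : e i \in L by rewrite mem_cat (map_f e) ?mem_enum ?orbT.
have := sum_horner_eq dek p.
rewrite (sum_horner_indicator d p x (fun i => pL _ (dL i))).
rewrite (sum_horner_indicator e p x (fun i => pL _ (eL i))).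
by move=> /(mulIf px0) /eqP; rewrite eqr_nat => /eqP.
Qed.

End PowerSums.

Lemma mxrank_ker_conj {F : fieldType} {n : nat} (P Q A : 'M[F]_n) :
  P \in unitmx -> Q \in unitmx -> \rank (kermx (P *m A *m Q)) = \rank (kermx A).
Proof.
move=> Pu Qu; rewrite !mxrank_ker mxrankMfree ?row_free_unit //.
by rewrite eqmxMfull // row_full_unit.
Qed.

Section SpectralDecomposition.
Context {R : realType} {N : nat}.
Local Notation C := R[i].
Local Notation RtoC := (@RtoC R).
Implicit Types (b X Y U V W D : 'M[C]_N) (d e : 'rV[R]_N).

Lemma RtoCE (x : R) : RtoC x = x%:C%C.
Proof. by []. Qed.

Lemma unitarymx_tV {U} : U \is unitarymx -> U^t* *m U = 1%:M.
Proof. by rewrite -trmxC_unitary => /unitarymxP; rewrite trmxCK. Qed.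

Lemma trmxC_mul m n p (A : 'M[C]_(m, n)) (B : 'M[C]_(n, p)) :
  (A *m B)^t* = B^t* *m A^t*.
Proof. by rewrite trmx_mul map_mxM. Qed.

Lemma psdmx_spec_decomp {b} : psdmx b -> exists Ud, spec_decomp b Ud.
Proof.
move=> [bh bpos]; have herm : b \is hermsymmx.
  by apply/is_hermitianmxP; rewrite expr0 scale1r bh.
have bE := orthomx_spectralP (hermitian_normalmx herm).
have Pu := spectral_unitarymx b; rewrite invmx_unitary // in bE.
have spr := hermitian_spectral_diag_real herm.
set P := spectralmx b in bE Pu; set sp := spectral_diag b in bE spr.
have spE : map_mx RtoC (\row_j complex.Re (sp 0 j)) = sp.
  apply/matrixP => i j; rewrite !mxE ord1 RtoCE RRe_real //.
  by move/mxOverP: spr; apply.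
exists (P, \row_j complex.Re (sp 0 j)); split => //; split; last by rewrite /= spE.
move=> i; rewrite mxE; have := bpos (delta_mx 0 i *m P).
rewrite bE trmxC_mul !mulmxA mulmxtVK // -!mulmxA [P *m (P^t* *m _)]mulmxA.
rewrite (unitarymxP Pu) mul1mx mulmxA -rowE.
have -> : (row i (diag_mx sp) *m (delta_mx 0 i : 'rV[C]_N)^t*) 0 0 = sp 0 i.
  rewrite !mxE (bigD1 i) //= big1 => [|k ki].
    by rewrite !mxE !eqxx /= mulr1n conjC1 mulr1 addr0.
  by rewrite !mxE eq_sym (negbTE ki) /= mulr0n mul0r.
by rewrite lecE => /andP [_].
Qed.

Lemma spec_decomp_exp {b U d} k : spec_decomp b (U, d) ->
  b ^+ k = U^t* *m diag_mx (map_mx RtoC (\row_j d 0 j ^+ k)) *m U.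
Proof.
move=> [/= Uu [_ ->]]; elim: k => [|k IH].
  have -> : map_mx RtoC (\row_j d 0 j ^+ 0) = const_mx 1.
    by apply/matrixP => i j; rewrite !mxE expr0.
  by rewrite expr0 diag_const_mx mulmx1 unitarymx_tV.
rewrite exprSr IH -mulmxE -!mulmxA [U *m (U^t* *m _)]mulmxA (unitarymxP Uu) mul1mx.
rewrite [diag_mx _ *m (diag_mx _ *m U)]mulmxA mulmx_diag; do 3 f_equal.
by apply/matrixP => i j; rewrite !mxE exprSr !RtoCE rmorphM.
Qed.

Lemma mxtrace_unitary_conj U D : U \is unitarymx -> \tr (U^t* *m D *m U) = \tr D.
Proof. by move=> Uu; rewrite mxtrace_mulC mulmxA (unitarymxP Uu) mul1mx. Qed.

Lemma spec_decomp_Re_trace_exp {b U d} k : spec_decomp b (U, d) ->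
  complex.Re (\tr (b ^+ k)) = \sum_i d 0 i ^+ k.
Proof.
move=> bUd; rewrite (spec_decomp_exp k bUd) mxtrace_unitary_conj; last by case: bUd.
by rewrite mxtrace_diag raddf_sum; apply: eq_bigr => i _; rewrite !mxE.
Qed.

Lemma spec_decomp_perm {X Y U V d e} : spec_decomp X (U, d) -> spec_decomp Y (V, e) ->
  (forall k, complex.Re (\tr (X ^+ k)) = complex.Re (\tr (Y ^+ k))) ->
  exists s : 'S_N, forall i, e 0 i = d 0 (s i).
Proof.
move=> XUd YVe XYk; apply: (power_sums_perm (fun i => d 0 i) (fun i => e 0 i)) => k.
by rewrite -(spec_decomp_Re_trace_exp k XUd) -(spec_decomp_Re_trace_exp k YVe).
Qed.

Lemma perm_mx_trC (s : 'S_N) : (perm_mx s : 'M[C]_N)^t* = (perm_mx s)^T.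
Proof. by apply/matrixP => i j; rewrite !mxE conjC_nat. Qed.

Lemma trmxC_tr_perm_mx (s : 'S_N) : ((perm_mx s : 'M[C]_N)^T)^t* = perm_mx s.
Proof. by apply/matrixP => i j; rewrite !mxE conjC_nat. Qed.

Lemma perm_mx_unitary (s : 'S_N) : (perm_mx s : 'M[C]_N) \is unitarymx.
Proof. by apply/unitarymxP; rewrite perm_mx_trC tr_perm_mx -perm_mxM mulgV perm_mx1. Qed.

Lemma unitary_similar_of_Re_trace_exp {X Y} :
  (exists Ud, spec_decomp X Ud) -> (exists Ud, spec_decomp Y Ud) ->
  (forall k, complex.Re (\tr (X ^+ k)) = complex.Re (\tr (Y ^+ k))) ->
  exists2 W, W \is unitarymx & Y = W^t* *m X *m W.
Proof.
move=> [[U d] XUd] [[V e] YVe] XYk; have [s es] := spec_decomp_perm XUd YVe XYk.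
case: XUd => /= Uu [_ XE]; case: YVe => /= Vu [_ YE].
pose P : 'M[C]_N := perm_mx s.
(* [e] is a permutation of [d], so both diagonal matrices are conjugate by [P]. *)
have De : diag_mx (map_mx RtoC e) = P *m diag_mx (map_mx RtoC d) *m P^T.
  rewrite tr_perm_mx -col_permE -row_permE; apply/matrixP => i j.
  by rewrite !mxE (inj_eq perm_inj) es.
have Dd : diag_mx (map_mx RtoC d) = U *m X *m U^t*.
  by rewrite XE !mulmxA (unitarymxP Uu) mul1mx mulmxtVK.
exists (U^t* *m P^T *m V).
  by rewrite !mul_unitarymx ?trmxC_unitary ?trmx_unitary ?perm_mx_unitary.
by rewrite !trmxC_mul trmxCK /P trmxC_tr_perm_mx YE De Dd !mulmxA.
Qed.

Lemma mxpowRE {b} a : (exists Ud, spec_decomp b Ud) ->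
  exists U d, spec_decomp b (U, d) /\
    mxpowR b a = U^t* *m diag_mx (map_mx (fun x => RtoC (powR x a)) d) *m U.
Proof.
move=> bUd; move: (xgetPex (1%:M, 0) bUd); rewrite /mxpowR.
by case: (xget _ _) => U d ?; exists U, d.
Qed.

Lemma mulmx_unitary_conj {U} (A B : 'M[C]_N) : U \is unitarymx ->
  (U^t* *m A *m U) *m (U^t* *m B *m U) = U^t* *m (A *m B) *m U.
Proof. by move=> Uu; rewrite !mulmxA mulmxtVK. Qed.

Lemma mxpowR_comm b a :
  (exists Ud, spec_decomp b Ud) -> mxpowR b a *m b = b *m mxpowR b a.
Proof.
move=> /(mxpowRE a) [U [d [[/= Uu [_ bE]] ->]]].
by rewrite [in LHS]bE [in RHS]bE !(mulmx_unitary_conj _ _ Uu) diag_mxC.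
Qed.

Lemma Re_trace_mxpowR {b} a : (exists Ud, spec_decomp b Ud) ->
  exists U d, spec_decomp b (U, d) /\
    complex.Re (\tr (mxpowR b a)) = \sum_i powR (d 0 i) a.
Proof.
move=> /(mxpowRE a) [U [d [bUd ->]]]; exists U, d; split => //.
rewrite mxtrace_unitary_conj; last by case: bUd.
by rewrite mxtrace_diag raddf_sum; apply: eq_bigr => i _; rewrite !mxE.
Qed.

Lemma Re_trace_mxpowR_eq {X Y} a :
  (exists Ud, spec_decomp X Ud) -> (exists Ud, spec_decomp Y Ud) ->
  (forall k, complex.Re (\tr (X ^+ k)) = complex.Re (\tr (Y ^+ k))) ->
  complex.Re (\tr (mxpowR X a)) = complex.Re (\tr (mxpowR Y a)).
Proof.
move=> /(Re_trace_mxpowR a) [U [d [XUd ->]]] /(Re_trace_mxpowR a) [V [e [YVe ->]]] XYk.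
have [s es] := spec_decomp_perm XUd YVe XYk.
by under [RHS]eq_bigr do rewrite es; rewrite (reindex_inj (@perm_inj _ s)).
Qed.

Lemma eigenspace_unitary_conj W X lam : W \is unitarymx ->
  \rank (eigenspace (W^t* *m X *m W) lam) = \rank (eigenspace X lam).
Proof.
move=> Wu; rewrite /eigenspace.
have -> : W^t* *m X *m W - lam%:M = W^t* *m (X - lam%:M) *m W.
  by rewrite mulmxBr mulmxBl mul_mx_scalar -scalemxAl (unitarymx_tV Wu) scalemx1.
by apply: mxrank_ker_conj; apply: unitarymx_unit; rewrite ?trmxC_unitary.
Qed.

Lemma vnormE (v : 'cV[C]_N) : vnorm v = Num.sqrt (complex.Re ((v^t* *m v) 0 0)).
Proof.
rewrite /vnorm !mxE raddf_sum; congr Num.sqrt; apply: eq_bigr => i _.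
by rewrite !mxE; case: (v i 0) => x y /=; ring.
Qed.

Lemma vnorm_isometry W (v : 'cV[C]_N) : W^t* *m W = 1%:M -> vnorm (W *m v) = vnorm v.
Proof.
by move=> WtW; rewrite !vnormE trmxC_mul mulmxA -(mulmxA (v^t*)) WtW mulmx1.
Qed.

Lemma opnorm_unitary_conj W X : W \is unitarymx -> opnorm (W^t* *m X *m W) = opnorm X.
Proof.
move=> Wu; have WtW := unitarymx_tV Wu.
have WWt : W^t*^t* *m W^t* = 1%:M by rewrite trmxCK; exact/unitarymxP.
rewrite /opnorm; congr sup; apply/seteqP; split => _ [v /= v1 <-].
  exists (W *m v); first by rewrite /= vnorm_isometry.
  by rewrite -!mulmxA (vnorm_isometry _ _ WWt).
exists (W^t* *m v); first by rewrite /= vnorm_isometry.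
by rewrite -!mulmxA (vnorm_isometry _ _ WWt) !mulmxA mulmxtVK.
Qed.

Lemma psdmx_mulCmx {b} : psdmx b -> b^t* *m b = b ^+ 2.
Proof. by case=> -> _; rewrite expr2 mulmxE. Qed.

Lemma psdmx_sq_spec_decomp {b} : psdmx b -> exists Ud, spec_decomp (b^t* *m b) Ud.
Proof.
move=> bpsd; have [[U d] bUd] := psdmx_spec_decomp bpsd.
exists (U, \row_j d 0 j ^+ 2); rewrite psdmx_mulCmx //.
split; first by case: bUd.
by split; [move=> i; rewrite mxE sqr_ge0 | exact: spec_decomp_exp 2 bUd].
Qed.

Lemma snorm_eq_of_Re_trace_exp {s X Y} : psdmx X -> psdmx Y ->
  (forall k, complex.Re (\tr (X ^+ k)) = complex.Re (\tr (Y ^+ k))) ->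
  snorm s X = snorm s Y.
Proof.
move=> Xpsd Ypsd XYk.
have XYsq k : complex.Re (\tr ((X^t* *m X) ^+ k)) = complex.Re (\tr ((Y^t* *m Y) ^+ k)).
  by rewrite (psdmx_mulCmx Xpsd) (psdmx_mulCmx Ypsd) -(exprM X) -(exprM Y); exact: XYk.
have := Re_trace_mxpowR_eq (s / 2) (psdmx_sq_spec_decomp Xpsd) (psdmx_sq_spec_decomp Ypsd).
by rewrite /snorm /ntau => ->.
Qed.

End SpectralDecomposition.

Theorem mainTheorem3 (R : realType) (n : nat) (hn : (1 <= n)%N) (N : nat)
  (K : 'M[R[i]]_N) (hK : K ^t* = - K)
  (I : set R) (hI : is_interval I)
  (b db : R -> 'M[R[i]]_N) (hb : C1_curve I b db)
  (hpos : forall t, I t -> psdmx (b t))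
  (hode : forall t, I t ->
     db t = mxpowR (b t) (conj_exp (2 * n%:R) / 2) *m K
            - K *m mxpowR (b t) (conj_exp (2 * n%:R) / 2))
  (s : R) (hs : 1 <= s) :
  forall t1 t2, I t1 -> I t2 ->
    [/\ snorm s (b t1) = snorm s (b t2),
        (forall lam : R[i], \rank (eigenspace (b t1) lam) = \rank (eigenspace (b t2) lam))
      & opnorm (b t1) = opnorm (b t2)].
Proof.
move=> t1 t2 I1 I2.
have bdiag t : I t -> exists Ud, spec_decomp (b t) Ud.
  by move=> It; exact: psdmx_spec_decomp (hpos t It).
have trk := Re_trace_exp_const hI (fun t It => hb.1 t It) hode
  (fun t It => mxpowR_comm (b t) _ (bdiag t It)).
have trk12 k := trk k t1 t2 I1 I2.
have [W Wu b2E] := unitary_similar_of_Re_trace_exp (bdiag t1 I1) (bdiag t2 I2) trk12.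
split.
- exact: snorm_eq_of_Re_trace_exp (hpos t1 I1) (hpos t2 I2) trk12.
- by move=> lam; rewrite b2E; exact/esym/eigenspace_unitary_conj.
- by rewrite b2E opnorm_unitary_conj.
Qed.
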